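(* Let $\mathbf{S}=\mathbf{V}\boldsymbol{\Lambda}\mathbf{V}^{\mathsf{H}}$ and $\hat{\mathbf{S}}$ be $N\times N$ graph shift operators. Let $\mathbf{E}=\mathbf{U}\mathbf{M}\mathbf{U}^{\mathsf{H}}\in\mathcal{E}(\mathbf{S},\hat{\mathbf{S}})$ be a relative perturbation matrix whose norm satisfies $$d(\mathbf{S},\hat{\mathbf{S}})\le\|\mathbf{E}\|\le\varepsilon.$$ Then for any integral Lipschitz filter $\mathbf{h}$ with integral Lipschitz constant $C$, $$\|\mathbf{H}(\mathbf{S})-\mathbf{H}(\hat{\mathbf{S}})\|_{\mathcal{P}}\le 2C\left(1+\delta\sqrt{N}\right)\varepsilon+\mathcal{O}(\varepsilon^2),$$ where $\delta:=(\|\mathbf{U}-\mathbf{V}\|_2+1)^2-1$ is the eigenvector misalignment between $\mathbf{S}$ and $\mathbf{E}$.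
   Context: A graph shift operator is a real symmetric $N\times N$ matrix; $\mathbf{S}=\mathbf{V}\boldsymbol{\Lambda}\mathbf{V}^{\mathsf{H}}$ with $\mathbf{V}$ orthonormal eigenvectors and $\boldsymbol{\Lambda}$ diagonal; $\mathbf{E}$ is symmetric with $\mathbf{U}$ orthonormal and $\mathbf{M}$ diagonal. $\|\cdot\|,\|\cdot\|_2$ denote spectral norm (Euclidean norm for vectors). $\mathcal{P}$ is the set of $N\times N$ permutation matrices. The set of relative perturbation matrices modulo permutation is $\mathcal{E}(\mathbf{S},\hat{\mathbf{S}})=\{\mathbf{E}:\mathbf{P}^{\mathsf{T}}\hat{\mathbf{S}}\mathbf{P}=\mathbf{S}+(\mathbf{E}\mathbf{S}+\mathbf{S}\mathbf{E})\text{ for some }\mathbf{P}\in\mathcal{P}\}$, and $d(\mathbf{S},\hat{\mathbf{S}})=\min\{\|\mathbf{E}\|:\mathbf{P}\in\mathcal{P},\ \mathbf{P}^{\mathsf{T}}\hat{\mathbf{S}}\mathbf{P}=\mathbf{S}+\mathbf{E}\mathbf{S}+\mathbf{S}\mathbf{E}\}$. For linear operators, $\|\mathbf{A}-\hat{\mathbf{A}}\|_{\mathcal{P}}=\min_{\mathbf{P}\in\mathcal{P}}\max_{\|\mathbf{x}\|=1}\|\mathbf{P}^{\mathsf{T}}(\mathbf{A}\mathbf{x})-\hat{\mathbf{A}}(\mathbf{P}^{\mathsf{T}}\mathbf{x})\|$. A filter $\mathbf{h}=\{h_k\}_{k\ge0}$ defines $\mathbf{H}(\mathbf{S})=\sum_k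 h_k\mathbf{S}^k$ and frequency response $h(\lambda)=\sum_k h_k\lambda^k$ (analytic), with $|h(\lambda)|\le1$. It is integral Lipschitz with constant $C>0$ if $|h(\lambda_2)-h(\lambda_1)|\le C\,\frac{|\lambda_2-\lambda_1|}{|\lambda_1+\lambda_2|/2}$ for all $\lambda_1,\lambda_2$. $\mathcal{O}(\varepsilon^2)$ denotes a term bounded by a constant times $\varepsilon^2$. *)

From HB Require Import structures.
From mathcomp Require Import all_boot all_order all_fingroup all_algebra.
From mathcomp Require Import all_classical all_reals all_analysis.
Set Implicit Arguments. Unset Strict Implicit. Unset Printing Implicit Defensive.
Import Order.TTheory GRing.Theory Num.Theory numFieldNormedType.Exports.
Local Open Scope classical_set_scope.
Local Open Scope ring_scope.

Section Defs.
Variable R : realType.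

Definition enorm (N : nat) (x : 'cV[R]_N) : R := Num.sqrt (\sum_i (x i 0) ^+ 2).

Definition opnorm (N : nat) (A : 'M[R]_N) : R :=
  sup [set enorm (A *m x) | x in [set x : 'cV[R]_N | enorm x = 1]].

Definition permmx_set (N : nat) : set 'M[R]_N :=
  [set P | exists s : 'S_N, P = perm_mx s].

Definition relpert (N : nat) (S Shat : 'M[R]_N) : set 'M[R]_N :=
  [set E | exists2 P, @permmx_set N P & P^T *m Shat *m P = S + (E *m S + S *m E)].

Definition dist_rel (N : nat) (S Shat : 'M[R]_N) : R :=
  inf [set opnorm E | E in relpert S Shat].

Definition perm_dist_norm (N : nat) (A Ahat : 'M[R]_N) : R :=
  inf [set opnorm (P^T *m A - Ahat *m P^T) | P in @permmx_set N].

Definition freq_resp (h : nat -> R) (l : R) : R :=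
  limn (fun n => \sum_(k < n) h k * l ^+ k).

Definition seqlim (u : nat -> R) : R := limn u.

Definition graph_filter (N : nat) (h : nat -> R) (S : 'M[R]_N) : 'M[R]_N :=
  \matrix_(i, j) seqlim (fun n => (\sum_(k < n) h k *: S ^+ k) i j).

Definition analytic_filter (h : nat -> R) : Prop :=
  forall l : R, cvgn (fun n => \sum_(k < n) h k * l ^+ k).

(* integral Lipschitz, denominator cleared:
   |h(l2) - h(l1)| <= C |l2 - l1| / (|l1 + l2| / 2) *)
Definition integral_lipschitz (h : nat -> R) (C : R) : Prop :=
  forall l1 l2 : R,
    `|freq_resp h l2 - freq_resp h l1| * (`|l1 + l2| / 2) <= C * `|l2 - l1|.

Definition misalign (N : nat) (U V : 'M[R]_N) : R := (opnorm (U - V) + 1) ^+ 2 - 1.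

End Defs.

From HB Require Import structures.
From mathcomp Require Import all_boot all_order all_fingroup all_algebra.
From mathcomp Require Import all_classical all_reals all_analysis.
From mathcomp Require Import complex ring lra.
Set Implicit Arguments. Unset Strict Implicit. Unset Printing Implicit Defensive.
Import Order.TTheory GRing.Theory Num.Theory numFieldNormedType.Exports.
Local Open Scope classical_set_scope.
Local Open Scope ring_scope.

(* Relabel the nodes of [Shat] so that [Shat P = P (S + E S + S E)] and write
   [S = V L V^T]; then [H(Shat) P - P H(S) = P V (H(L + X) - H(L)) V^T] with
   [X = Et L + L Et] and [Et = V^T E V]. To first order in [X], [H(L + X) - H(L)]
   is the Hadamard product of [X] with the divided differences of [h] at the
   eigenvalues (Daleckii-Krein), i.e. the Hadamard product of [Et] with
   [g_ij = (h l_i - h l_j) (l_i + l_j) / (l_i - l_j)], and the integral Lipschitz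
   condition gives [|g_ij| <= 2 C]. Now [Et] differs from the diagonal matrix
   [U^T E U = diag mu] by at most [2 ||U - V|| ||E||]; the diagonal part
   contributes [2 C ||E||] and, via the Frobenius norm, the rest at most
   [2 C sqrt N * 2 ||U - V|| ||E||], which is below [2 C delta sqrt N ||E||]. The
   remainder is at most [sum_k |h_k| k^2 c^k ||X||^2], finite because [h] is
   entire; for large [||E||] the trivial bound [||H(.)|| <= 1] is absorbed into
   [K eps^2]. *)

Section RealSymmetricSpectral.
Local Open Scope sesquilinear_scope.
Variable R : realType.
Local Notation toC := (real_complex R).

Lemma Re_sum I (r : seq I) (P : pred I) (F : I -> R[i]) :
  complex.Re (\sum_(i <- r | P i) F i) = \sum_(i <- r | P i) complex.Re (F i).
Proof. by apply: big_morph => [[a b] [c d]|]. Qed.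

Lemma Re_mul_real (z : R[i]) (r : R) : complex.Re (z * toC r) = complex.Re z * r.
Proof. by case: z => a b /=; rewrite mulr0 subr0. Qed.

Lemma map_mx_exp n (f : {rmorphism R -> R[i]}) (A : 'M[R]_n) k :
  map_mx f (A ^+ k) = map_mx f A ^+ k.
Proof.
elim: k => [|k IH]; first by rewrite !expr0 map_mx1.
by rewrite !exprS -!mulmxE map_mxM IH.
Qed.

(* [x^T A x = |sum_j x_j p_j|^2] for the real part [A] of the rank-one matrix [p^* p]. *)
Lemma Re_outer_psd n (p : 'rV[R[i]]_n) (x : 'cV[R]_n) :
  0 <= (x^T *m (\matrix_(i, j) complex.Re (Num.conj (p 0 i) * p 0 j)) *m x) 0 0.
Proof.
pose z := \sum_j toC (x j 0) * p 0 j.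
suff -> : (x^T *m (\matrix_(i, j) complex.Re (Num.conj (p 0 i) * p 0 j)) *m x) 0 0
    = complex.Re (Num.conj z * z).
  by case: z => a b /=; rewrite mulNr opprK addr_ge0 // -expr2 sqr_ge0.
rewrite /z rmorph_sum /= mulr_suml Re_sum mxE.
rewrite [RHS](eq_bigr (fun i => \sum_j x i 0 * complex.Re ((p 0 i)^* * p 0 j) * x j 0)).
  rewrite exchange_big /=; apply: eq_bigr => j _.
  by rewrite !mxE mulr_suml; apply: eq_bigr => i _; rewrite !mxE.
move=> i _; rewrite mulr_sumr Re_sum; apply: eq_bigr => j _.
rewrite rmorphM /= (_ : Num.conj (toC (x i 0)) = toC (x i 0)); last exact: conjc_real.
have -> : toC (x i 0) * (p 0 i)^* * (toC (x j 0) * p 0 j)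
    = (p 0 i)^* * p 0 j * toC (x i 0 * x j 0) by rewrite rmorphM /=; ring.
by rewrite Re_mul_real; ring.
Qed.

(* [a l] is the real part of the spectral projector of [B], seen as a complex
   Hermitian matrix, onto its [l]-th eigenvector. *)
Lemma real_sym_spectral n (B : 'M[R]_n) : B^T = B ->
  exists (d : 'I_n -> R) (a : 'I_n -> 'M[R]_n),
    (forall k, B ^+ k = \sum_l (d l ^+ k) *: a l) /\
    (forall l (x : 'cV[R]_n), 0 <= (x^T *m a l *m x) 0 0).
Proof.
move=> Bsym; pose A := map_mx toC B.
have Aherm : A \is hermsymmx.
  apply: (@realsym_hermsym _ _ A).
    apply/is_hermitianmxP; rewrite expr0 scale1r.
    apply/matrixP => i j; rewrite !mxE /=.
    by have := congr1 (fun M : 'M[R]_n => M i j) Bsym; rewrite mxE => <-.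
  by apply/mxOverP => i j; rewrite mxE; apply/complex_realP; exists (B i j).
set P := spectralmx A; set D := spectral_diag A.
have PP : P *m P^t* = 1%:M by apply/unitarymxP; exact: spectral_unitarymx.
have AE : A = P^t* *m diag_mx D *m P.
  have /orthomx_spectralP := hermitian_normalmx Aherm.
  by rewrite invmx_unitary // spectral_unitarymx.
have AkE k : A ^+ k = P^t* *m diag_mx (\row_j (D 0 j ^+ k)) *m P.
  elim: k => [|k IH].
    have -> : diag_mx (\row_j (D 0 j ^+ 0)) = 1%:M.
      by apply/matrixP => i j; rewrite !mxE expr0.
    by rewrite expr0 mulmx1 mulmx1C.
  rewrite exprS -mulmxE IH AE !mulmxA -[_ *m P *m P^t*]mulmxA PP mulmx1.
  rewrite -[_ *m diag_mx D *m _]mulmxA mulmx_diag -!mulmxA; congr (_ *m (diag_mx _ *m _)).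
  by apply/rowP => j; rewrite !mxE exprS.
pose d l := complex.Re (D 0 l).
have DE l : D 0 l = toC (d l).
  by rewrite /d RRe_real //; exact: (mxOverP (hermitian_spectral_diag_real Aherm) 0 l).
exists d, (fun l => \matrix_(i, j) complex.Re (Num.conj (row l P 0 i) * row l P 0 j)).
split=> [k|l x]; last exact: Re_outer_psd.
apply/matrixP => i j.
have : toC ((B ^+ k) i j) = (A ^+ k) i j by rewrite /A -map_mx_exp mxE.
move/(congr1 (@complex.Re R)) => /= ->.
rewrite AkE mul_mx_diag summxE mxE Re_sum; apply: eq_bigr => l _.
by rewrite !mxE DE -rmorphXn /= -mulrA [_ * P l j]mulrC mulrA Re_mul_real mulrC.
Qed.

End RealSymmetricSpectral.

Section EuclideanNorm.
Variable R : realType.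
Implicit Types (n : nat).

Definition sqnorm n (x : 'cV[R]_n) : R := \sum_i x i 0 ^+ 2.

Definition frobenius2 n (A : 'M[R]_n) : R := \sum_i \sum_j A i j ^+ 2.

Lemma sqnorm_ge0 n (x : 'cV[R]_n) : 0 <= sqnorm x.
Proof. by apply: sumr_ge0 => i _; apply: sqr_ge0. Qed.

Lemma sqnormE n (x : 'cV[R]_n) : sqnorm x = (x^T *m x) 0 0.
Proof. by rewrite /sqnorm mxE; apply: eq_bigr => i _; rewrite mxE expr2. Qed.

Lemma sqnorm_eq0 n (x : 'cV[R]_n) : sqnorm x = 0 -> x = 0.
Proof.
move=> /psumr_eq0P x0; apply/matrixP => i j; rewrite ord1 mxE.
by apply/eqP; rewrite -sqrf_eq0 x0 // => k _; apply: sqr_ge0.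
Qed.

Lemma sqnorm_delta n (j : 'I_n) : sqnorm (delta_mx j 0 : 'cV[R]_n) = 1.
Proof.
rewrite /sqnorm (bigD1 j) //= big1 ?addr0 ?mxE ?eqxx ?expr1n //.
by move=> i ij; rewrite mxE (negPf ij) /= expr0n.
Qed.

Lemma enorm_ge0 n (x : 'cV[R]_n) : 0 <= enorm x.
Proof. exact: sqrtr_ge0. Qed.

Lemma sqr_enorm n (x : 'cV[R]_n) : enorm x ^+ 2 = sqnorm x.
Proof. by rewrite sqr_sqrtr // sqnorm_ge0. Qed.

Lemma enorm_leE n (x : 'cV[R]_n) c : 0 <= c -> (enorm x <= c) = (sqnorm x <= c ^+ 2).
Proof.
move=> c0; rewrite -[X in _ <= X]ger0_norm // -sqrtr_sqr ler_sqrt //.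
exact: sqr_ge0.
Qed.

Lemma enormZ n (k : R) (x : 'cV[R]_n) : enorm (k *: x) = `|k| * enorm x.
Proof.
rewrite /enorm -sqrtr_sqr -sqrtrM ?sqr_ge0 //; congr Num.sqrt.
by rewrite mulr_sumr; apply: eq_bigr => i _; rewrite mxE exprMn.
Qed.

Lemma cauchy_schwarz n (a b : 'I_n -> R) :
  (\sum_i a i * b i) ^+ 2 <= (\sum_i a i ^+ 2) * (\sum_i b i ^+ 2).
Proof.
set A := \sum_i a i ^+ 2; set B := \sum_i b i ^+ 2; set P := \sum_i a i * b i.
have A0 : 0 <= A by apply: sumr_ge0 => i _; apply: sqr_ge0.
have [Az|Anz] := eqVneq A 0.
  have a0 i : a i = 0.
    by apply/eqP; rewrite -sqrf_eq0; apply/eqP; move: Az => /psumr_eq0P -> // j _; apply: sqr_ge0.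
  rewrite /P big1 ?expr0n ?mulr_ge0 //; last by move=> i _; rewrite a0 mul0r.
  by apply: sumr_ge0 => i _; apply: sqr_ge0.
(* the quadratic form [sum_i (A b_i - P a_i)^2 = A (A B - P^2)] is nonnegative *)
have : 0 <= \sum_i (A * b i - P * a i) ^+ 2 by apply: sumr_ge0 => i _; apply: sqr_ge0.
have -> : \sum_i (A * b i - P * a i) ^+ 2 = A * (A * B - P ^+ 2).
  rewrite (eq_bigr (fun i => A ^+ 2 * b i ^+ 2 - (2 * A * P) * (a i * b i)
                             + P ^+ 2 * a i ^+ 2)); last by move=> i _; ring.
  by rewrite big_split /= big_split /= sumrN -!mulr_sumr -/A -/B -/P; ring.
by rewrite pmulr_rge0 ?subr_ge0 // lt_def Anz A0.
Qed.

Lemma sqnorm_mulmx_le_frobenius n (A : 'M[R]_n) (x : 'cV[R]_n) :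
  sqnorm (A *m x) <= frobenius2 A * sqnorm x.
Proof.
rewrite /sqnorm mulr_suml; apply: ler_sum => i _.
by rewrite mxE; exact: cauchy_schwarz.
Qed.

Lemma ler_enormD n (x y : 'cV[R]_n) : enorm (x + y) <= enorm x + enorm y.
Proof.
rewrite enorm_leE ?addr_ge0 ?enorm_ge0 //.
have -> : sqnorm (x + y) = sqnorm x + 2 * \sum_i x i 0 * y i 0 + sqnorm y.
  rewrite /sqnorm (eq_bigr (fun i => x i 0 ^+ 2 + 2 * (x i 0 * y i 0) + y i 0 ^+ 2)).
    by rewrite !big_split /= mulr_sumr.
  by move=> i _; rewrite mxE; ring.
rewrite sqrrD !sqr_enorm lerD2r lerD2l mulr2n -mulr2n mulr_natl lerMn2r /=.
apply: le_trans (ler_norm _) _.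
rewrite -(ger0_norm (mulr_ge0 (enorm_ge0 x) (enorm_ge0 y))).
rewrite -ler_sqr ?nnegrE ?normr_ge0 // !real_normK ?num_real // exprMn !sqr_enorm.
exact: (cauchy_schwarz (fun i => x i 0) (fun i => y i 0)).
Qed.

End EuclideanNorm.

Section OperatorNorm.
Variable R : realType.
Variable n : nat.
Implicit Types (A B Q : 'M[R]_n) (x y : 'cV[R]_n).

Lemma opnorm_has_ubound A :
  has_ubound [set enorm (A *m x) | x in [set x : 'cV[R]_n | enorm x = 1]].
Proof.
exists (Num.sqrt (frobenius2 A)) => _ [x /= x1 <-].
rewrite enorm_leE ?sqrtr_ge0 // sqr_sqrtr; last first.
  by apply: sumr_ge0 => i _; apply: sumr_ge0 => j _; apply: sqr_ge0.
by have := sqnorm_mulmx_le_frobenius A x; rewrite -(sqr_enorm x) x1 expr1n mulr1.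
Qed.

Lemma opnorm_le A c : 0 <= c -> (forall x, enorm (A *m x) <= c * enorm x) -> opnorm A <= c.
Proof.
move=> c0 Ax; rewrite /opnorm.
have [[x x1]|nex] := pselect (exists x : 'cV[R]_n, enorm x = 1).
  apply: ge_sup; first by exists (enorm (A *m x)), x.
  by move=> _ [y /= y1 <-]; have := Ax y; rewrite y1 mulr1.
suff -> : [set enorm (A *m x) | x in [set x : 'cV[R]_n | enorm x = 1]] = set0 by rewrite sup0.
by apply/seteqP; split => // _ [x /= x1 _]; apply: nex; exists x.
Qed.

Lemma opnorm_le_sqnorm A c : 0 <= c ->
  (forall x, sqnorm (A *m x) <= c ^+ 2 * sqnorm x) -> opnorm A <= c.
Proof.
move=> c0 Ax; apply: opnorm_le => // x.
by rewrite enorm_leE ?mulr_ge0 ?enorm_ge0 // exprMn sqr_enorm.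
Qed.

Lemma opnorm0 : opnorm (0 : 'M[R]_n) <= 0.
Proof.
apply: opnorm_le_sqnorm => // x.
by rewrite mul0mx expr0n mul0r /sqnorm big1 // => i _; rewrite mxE expr0n.
Qed.

Lemma opnorm_ge0 A : 0 <= opnorm A.
Proof.
rewrite /opnorm.
have [[x x1]|nex] := pselect (exists x : 'cV[R]_n, enorm x = 1).
  apply: le_trans (enorm_ge0 (A *m x)) _.
  by apply: ub_le_sup; [exact: opnorm_has_ubound | exists x].
suff -> : [set enorm (A *m x) | x in [set x : 'cV[R]_n | enorm x = 1]] = set0 by rewrite sup0.
by apply/seteqP; split => // _ [x /= x1 _]; apply: nex; exists x.
Qed.

Lemma enorm_mulmx_le A x : enorm (A *m x) <= opnorm A * enorm x.
Proof.
have [x0|xn0] := eqVneq (enorm x) 0.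
  have -> : x = 0 by apply: sqnorm_eq0; rewrite -sqr_enorm x0 expr0n.
  rewrite mulmx0 -{1}(scale0r (0 : 'cV[R]_n)) enormZ normr0 mul0r.
  by rewrite mulr_ge0 ?opnorm_ge0 ?enorm_ge0.
have xp : 0 < enorm x by rewrite lt_def xn0 enorm_ge0.
pose u := (enorm x)^-1 *: x.
have u1 : enorm u = 1 by rewrite enormZ ger0_norm ?invr_ge0 ?enorm_ge0 // mulVf.
have : enorm (A *m u) <= opnorm A.
  by apply: ub_le_sup; [exact: opnorm_has_ubound | exists u].
rewrite /u -scalemxAr enormZ ger0_norm ?invr_ge0 ?enorm_ge0 //.
by rewrite ler_pdivrMl // mulrC.
Qed.

Lemma sqnorm_mulmx_le A x : sqnorm (A *m x) <= opnorm A ^+ 2 * sqnorm x.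
Proof.
rewrite -!sqr_enorm -exprMn ler_sqr ?nnegrE ?mulr_ge0 ?enorm_ge0 ?opnorm_ge0 //.
exact: enorm_mulmx_le.
Qed.

Lemma ler_opnormM A B : opnorm (A *m B) <= opnorm A * opnorm B.
Proof.
apply: opnorm_le; first by rewrite mulr_ge0 ?opnorm_ge0.
move=> x; rewrite -mulmxA; apply: le_trans (enorm_mulmx_le _ _) _.
by rewrite -mulrA; apply: ler_wpM2l; rewrite ?opnorm_ge0 // enorm_mulmx_le.
Qed.

Lemma ler_opnormD A B : opnorm (A + B) <= opnorm A + opnorm B.
Proof.
apply: opnorm_le; first by rewrite addr_ge0 ?opnorm_ge0.
move=> x; rewrite mulmxDl mulrDl; apply: le_trans (ler_enormD _ _) _.
by apply: lerD; apply: enorm_mulmx_le.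
Qed.

Lemma ler_opnormZ (k : R) A : opnorm (k *: A) <= `|k| * opnorm A.
Proof.
apply: opnorm_le; first by rewrite mulr_ge0 ?opnorm_ge0.
by move=> x; rewrite -scalemxAl enormZ -mulrA; apply: ler_wpM2l; rewrite ?enorm_mulmx_le.
Qed.

Lemma ler_opnormN A : opnorm (- A) <= opnorm A.
Proof. by rewrite -scaleN1r; apply: le_trans (ler_opnormZ _ _) _; rewrite normrN normr1 mul1r. Qed.

Lemma ler_opnorm_sum I (r : seq I) (P : pred I) (F : I -> 'M[R]_n) :
  opnorm (\sum_(i <- r | P i) F i) <= \sum_(i <- r | P i) opnorm (F i).
Proof.
elim/big_rec2: _ => [|i y M _ IH]; first exact: opnorm0.
by apply: le_trans (ler_opnormD _ _) _; rewrite lerD2l.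
Qed.

Lemma ler_opnormX A k : opnorm (A ^+ k) <= opnorm A ^+ k.
Proof.
elim: k => [|k IH].
  rewrite !expr0; apply: opnorm_le_sqnorm => // x; rewrite mul1mx expr1n mul1r //.
rewrite !exprS -mulmxE; apply: le_trans (ler_opnormM _ _) _.
by apply: ler_wpM2l; rewrite ?opnorm_ge0.
Qed.

Lemma opnorm_orth_le1 Q : Q^T *m Q = 1%:M -> opnorm Q <= 1.
Proof.
move=> QQ; apply: opnorm_le_sqnorm => // x.
by rewrite !sqnormE trmx_mul -mulmxA (mulmxA Q^T) QQ mul1mx expr1n mul1r.
Qed.

Lemma opnorm_trmx_orth_le1 Q : Q^T *m Q = 1%:M -> opnorm Q^T <= 1.
Proof. by move=> QQ; apply: opnorm_orth_le1; rewrite trmxK mulmx1C. Qed.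

Lemma ler_opnorm_orthM A Q1 Q2 : Q1^T *m Q1 = 1%:M -> Q2 *m Q2^T = 1%:M ->
  opnorm (Q1 *m A *m Q2) <= opnorm A.
Proof.
move=> Q1Q1 Q2Q2.
have nQ2 : opnorm Q2 <= 1 by apply: opnorm_orth_le1; rewrite mulmx1C.
apply: le_trans (ler_opnormM _ _) _; rewrite -[X in _ <= X]mulr1.
apply: ler_pM; rewrite ?opnorm_ge0 //.
apply: le_trans (ler_opnormM _ _) _; rewrite -[X in _ <= X]mul1r.
by apply: ler_pM; rewrite ?opnorm_ge0 ?opnorm_orth_le1.
Qed.

Lemma ler_entry_opnorm A i j : `|A i j| <= opnorm A.
Proof.
have := sqnorm_mulmx_le A (delta_mx j 0); rewrite sqnorm_delta mulr1 -colE => Aj.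
rewrite -ler_sqr ?nnegrE ?normr_ge0 ?opnorm_ge0 // real_normK ?num_real //.
apply: le_trans Aj; rewrite /sqnorm (bigD1 i) //= {1}mxE -[X in X <= _]addr0 lerD2l.
by apply: sumr_ge0 => k _; apply: sqr_ge0.
Qed.

Lemma opnorm_diag_le (v : 'rV[R]_n) c : 0 <= c -> (forall i, `|v 0 i| <= c) ->
  opnorm (diag_mx v) <= c.
Proof.
move=> c0 vc; apply: opnorm_le_sqnorm => // x.
rewrite /sqnorm mulr_sumr; apply: ler_sum => i _.
rewrite mul_diag_mx mxE exprMn; apply: ler_wpM2r; rewrite ?sqr_ge0 //.
by rewrite -real_normK ?num_real // ler_sqr ?nnegrE ?normr_ge0.
Qed.

Lemma frobenius2_le A : frobenius2 A <= n%:R * opnorm A ^+ 2.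
Proof.
rewrite /frobenius2 exchange_big /=.
apply: (@le_trans _ _ (\sum_(j < n) opnorm A ^+ 2)); last by rewrite sumr_const card_ord mulr_natl.
apply: ler_sum => j _.
have := sqnorm_mulmx_le A (delta_mx j 0); rewrite sqnorm_delta mulr1 -colE.
by rewrite /sqnorm (eq_bigr (fun i => A i j ^+ 2)) // => i _; rewrite !mxE.
Qed.

Definition schur (G Y : 'M[R]_n) : 'M[R]_n := \matrix_(i, j) (G i j * Y i j).

Lemma opnorm_schur_le (G Y : 'M[R]_n) (g : R) : 0 <= g -> (forall i j, `|G i j| <= g) ->
  opnorm (schur G Y) <= g * Num.sqrt n%:R * opnorm Y.
Proof.
move=> g0 Gg; apply: opnorm_le_sqnorm; first by rewrite !mulr_ge0 ?sqrtr_ge0 ?opnorm_ge0.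
move=> x; apply: le_trans (sqnorm_mulmx_le_frobenius _ _) _.
apply: ler_wpM2r; rewrite ?sqnorm_ge0 // !exprMn sqr_sqrtr ?ler0n // -mulrA.
apply: le_trans (ler_wpM2l (sqr_ge0 g) (frobenius2_le Y)).
rewrite /frobenius2 mulr_sumr; apply: ler_sum => i _; rewrite mulr_sumr; apply: ler_sum => j _.
rewrite mxE exprMn; apply: ler_wpM2r; rewrite ?sqr_ge0 // -real_normK ?num_real //.
by rewrite ler_sqr ?nnegrE ?normr_ge0.
Qed.

End OperatorNorm.

Section PowerSeries.
Variable R : realType.
Implicit Types (h : nat -> R) (a b c t : R).

Lemma geometric_half_le n : \sum_(k < n) (2^-1 : R) ^+ k <= 2.
Proof.
suff sumE m : \sum_(k < m) (2^-1 : R) ^+ k + 2 * (2^-1) ^+ m = 2.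
  have : 0 <= 2 * (2^-1 : R) ^+ n by rewrite mulr_ge0 // exprn_ge0.
  by have := sumE n; lra.
elim: m => [|m IH]; first by rewrite big_ord0 expr0 add0r mulr1.
rewrite big_ord_recr /= exprSr (_ : 2 * ((2^-1 : R) ^+ m * 2^-1) = (2^-1) ^+ m); last by field.
by move: IH; set y := (2^-1 : R) ^+ m; lra.
Qed.

Lemma cvg_abs_bounded_series (u : nat -> R) (T : R) :
  (forall n, \sum_(k < n) `|u k| <= T) -> cvgn (fun n => \sum_(k < n) u k).
Proof.
move=> uT; have -> : (fun n => \sum_(k < n) u k) = series u.
  by apply: funext => n; rewrite /series /= big_mkord.
apply: normed_cvg; apply: nondecreasing_is_cvgn.
  by apply: nondecreasing_series => k _ _; apply: normr_ge0.
by exists T => _ [n _ <-]; rewrite /normed_series_of /= seriesEord; exact: uT.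
Qed.

(* [h_k (2c)^k] is bounded since the series converges at [2c], so [|h_k| c^k]
   decays geometrically. *)
Lemma abs_series_bounded h c : analytic_filter h -> 0 <= c ->
  exists T, forall n, \sum_(k < n) `|h k| * c ^+ k <= T.
Proof.
move=> an c0; pose u k := h k * (2 * c) ^+ k.
have u0 : u @ \oo --> 0.
  apply: cvg_series_cvg_0; have -> : series u = (fun n => \sum_(k < n) h k * (2 * c) ^+ k).
    by apply: funext => n; rewrite /series /= big_mkord.
  exact: an.
have [M uM] : exists M, forall k, `|u k| <= M.
  have [M0 [_ uM]] := cvg_seq_bounded (cvgP _ u0).
  by exists (M0 + 1) => k; apply: (uM (M0 + 1)); rewrite ?ltrDl.
have M0 : 0 <= M := le_trans (normr_ge0 _) (uM 0%N).
exists (M * 2) => n; apply: le_trans (ler_wpM2l M0 (geometric_half_le n)).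
rewrite mulr_sumr; apply: ler_sum => k _.
have -> : `|h k| * c ^+ k = `|u k| * (2^-1) ^+ k.
  rewrite /u normrM [`|(2 * c) ^+ k|]ger0_norm ?exprn_ge0 ?mulr_ge0 //.
  by rewrite -mulrA -exprMn mulrAC divff ?mul1r.
by apply: ler_wpM2r; rewrite ?exprn_ge0.
Qed.

Lemma abs_series_sqr_bounded h c : analytic_filter h -> 0 <= c ->
  exists T, forall n, \sum_(k < n) `|h k| * (k%:R ^+ 2 * c ^+ k) <= T.
Proof.
move=> an c0; have [T hT] := abs_series_bounded an (mulr_ge0 (ler0n R 4) c0).
exists T => n; apply: le_trans (hT n); apply: ler_sum => k _.
apply: ler_wpM2l => //; rewrite exprMn; apply: ler_wpM2r; first exact: exprn_ge0.
have /ltnW : (k < 2 ^ k)%N by apply: ltn_expl.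
rewrite -(ler_nat R) natrX => k2.
have -> : (4 : R) ^+ k = (2 ^+ k) ^+ 2.
  by rewrite -exprM mulnC exprM; congr (_ ^+ _); rewrite expr2 -natrM.
by rewrite ler_sqr ?nnegrE ?exprn_ge0 ?ler0n.
Qed.

End PowerSeries.

Section DividedDifference.
Variable R : realType.
Implicit Types (a b c t : R).

(* [powdd k a b = (a^k - b^k) / (a - b)], the divided difference of [x^k],
   which equals [k a^(k-1)] when [a = b]. *)
Fixpoint powdd k a b : R := if k is k'.+1 then powdd k' a b * b + a ^+ k' else 0.

Lemma mulr_powdd k a b : (a - b) * powdd k a b = a ^+ k - b ^+ k.
Proof.
elim: k => [|k IH] /=; first by rewrite mulr0 !expr0 subrr.
by rewrite mulrDr mulrA IH !exprS; ring.
Qed.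

Lemma powdd_le k a b c : `|a| <= c -> `|b| <= c -> 1 <= c ->
  `|powdd k a b| <= k%:R ^+ 2 * c ^+ k.
Proof.
move=> ac bc c1; have c0 : 0 <= c by apply: le_trans c1.
elim: k => [|k IH] /=; first by rewrite normr0 expr0 mulr1 sqr_ge0.
apply: le_trans (ler_normD _ _) _; rewrite normrM normrX.
have e1 : `|powdd k a b| * `|b| <= k%:R ^+ 2 * c ^+ k * c by apply: ler_pM.
have e2 : `|a| ^+ k <= c ^+ k by rewrite lerXn2r ?nnegrE.
have e3 : c ^+ k <= c * c ^+ k by rewrite ler_peMl ?exprn_ge0.
have ck : 0 <= c ^+ k by apply: exprn_ge0.
have kk : 0 <= (k%:R : R) * (c * c ^+ k) by rewrite !mulr_ge0 ?ler0n.
rewrite -natr1 [c ^+ k.+1]exprS; nra.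
Qed.

Lemma ler_exprD_sub k a t c : `|a| + `|t| <= c -> 1 <= c ->
  `|(a + t) ^+ k - a ^+ k| <= k%:R * c ^+ k * `|t|.
Proof.
move=> atc c1; have c0 : 0 <= c by apply: le_trans c1.
have ac : `|a| <= c by apply: le_trans atc; rewrite lerDl.
have a_tc : `|a + t| <= c by apply: le_trans (ler_normD _ _) atc.
elim: k => [|k IH]; first by rewrite !expr0 subrr normr0 !mul0r.
have -> : (a + t) ^+ k.+1 - a ^+ k.+1 = ((a + t) ^+ k - a ^+ k) * (a + t) + a ^+ k * t.
  by rewrite !exprS; ring.
apply: le_trans (ler_normD _ _) _; rewrite !normrM normrX.
have e1 : `|(a + t) ^+ k - a ^+ k| * `|a + t| <= k%:R * c ^+ k * `|t| * c by apply: ler_pM.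
have e2 : `|a| ^+ k * `|t| <= c ^+ k * `|t| by rewrite ler_wpM2r ?lerXn2r ?nnegrE.
have e3 : c ^+ k * `|t| <= c * c ^+ k * `|t| by rewrite ler_wpM2r ?ler_peMl ?exprn_ge0.
have tt : 0 <= `|t| by apply: normr_ge0.
have ck : 0 <= c ^+ k by apply: exprn_ge0.
rewrite -natr1 [c ^+ k.+1]exprS; nra.
Qed.

Lemma ler_powddD_sub k a t c : `|a| + `|t| <= c -> 1 <= c ->
  `|powdd k (a + t) a - powdd k a a| <= k%:R ^+ 2 * c ^+ k * `|t|.
Proof.
move=> atc c1; have c0 : 0 <= c by apply: le_trans c1.
have ac : `|a| <= c by apply: le_trans atc; rewrite lerDl.
elim: k => [|k IH] /=; first by rewrite subrr normr0 expr0 mulr1 mulr_ge0 ?sqr_ge0 ?normr_ge0.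
have -> : powdd k (a + t) a * a + (a + t) ^+ k - (powdd k a a * a + a ^+ k)
   = (powdd k (a + t) a - powdd k a a) * a + ((a + t) ^+ k - a ^+ k) by ring.
apply: le_trans (ler_normD _ _) _; rewrite normrM.
have e1 : `|powdd k (a + t) a - powdd k a a| * `|a| <= k%:R ^+ 2 * c ^+ k * `|t| * c.
  by apply: ler_pM.
have e2 := ler_exprD_sub k atc c1.
have e3 : c ^+ k * `|t| <= c * c ^+ k * `|t| by rewrite ler_wpM2r ?ler_peMl ?exprn_ge0.
have e4 : k%:R * c ^+ k * `|t| <= k%:R * (c * c ^+ k) * `|t|.
  by rewrite ler_wpM2r ?ler_wpM2l ?ler0n ?ler_peMl ?exprn_ge0.
have tt : 0 <= `|t| by apply: normr_ge0.
have ck : 0 <= c ^+ k by apply: exprn_ge0.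
have kk : 0 <= (k%:R : R) * (c * c ^+ k) * `|t| by rewrite !mulr_ge0 ?ler0n.
rewrite -natr1 [c ^+ k.+1]exprS; nra.
Qed.

Lemma ler_limn_dist (u v : nat -> R) e : cvgn u -> cvgn v ->
  (forall n, `|u n - v n| <= e) -> `|limn u - limn v| <= e.
Proof.
move=> cu cv uve.
have uv : (fun n => `|u n - v n|) @ \oo --> `|limn u - limn v| by apply: cvg_norm; apply: cvgB.
rewrite -(cvg_lim _ uv) //; apply: limr_le; first by apply/cvg_ex; eexists; exact: uv.
exact: nearW.
Qed.

Lemma le_of_forall_le_addmul (x y W : R) : 0 <= W ->
  (forall t, 0 < t -> t <= 1 -> x <= y + t * W) -> x <= y.
Proof.
move=> W0 xy; apply/ler_addgt0Pr => e e0.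
pose t := Order.min 1 (e / (W + 1)).
have t0 : 0 < t by rewrite lt_min ltr01 divr_gt0 // ltr_wpDl.
apply: le_trans (xy t t0 _) _; first by rewrite /t ge_min lexx.
rewrite lerD2l.
have : t <= e / (W + 1) by rewrite /t ge_min lexx orbT.
rewrite ler_pdivlMr ?ltr_wpDl // => te; apply: le_trans te.
by apply: ler_wpM2l; [exact: ltW | rewrite lerDl].
Qed.

End DividedDifference.

Section FreqDividedDifference.
Variables (R : realType) (h : nat -> R).
Hypothesis an : analytic_filter h.
Implicit Types (a b c t : R).

Definition freq_psum n a : R := \sum_(k < n) h k * a ^+ k.
Definition freq_dd_psum n a b : R := \sum_(k < n) h k * powdd k a b.
Definition freq_dd a b : R := limn (fun n => freq_dd_psum n a b).

Lemma freq_psum_cvg a : (fun n => freq_psum n a) @ \oo --> freq_resp h a.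
Proof. exact: an. Qed.

Lemma freq_dd_psum_cvg a b : cvgn (fun n => freq_dd_psum n a b).
Proof.
pose c := `|a| + `|b| + 1.
have c1 : 1 <= c by rewrite /c lerDr addr_ge0.
have [T hT] := abs_series_sqr_bounded an (le_trans ler01 c1).
apply: (@cvg_abs_bounded_series _ (fun k => h k * powdd k a b) T) => n.
apply: le_trans (hT n).
apply: ler_sum => k _; rewrite normrM; apply: ler_wpM2l => //.
by apply: powdd_le; rewrite // /c -addrA ?lerDl ?addr_ge0 // addrC -addrA lerDl addr_ge0.
Qed.

Lemma freq_ddE a b : a != b -> freq_dd a b = (freq_resp h a - freq_resp h b) / (a - b).
Proof.
move=> ab; have ab0 : a - b != 0 by rewrite subr_eq0.
rewrite /freq_dd.
have -> : (fun n => freq_dd_psum n a b) = (fun n => (freq_psum n a - freq_psum n b) / (a - b)).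
  apply: funext => n; apply: (mulfI ab0); rewrite [RHS]mulrC divfK //.
  by rewrite mulr_sumr -sumrB; apply: eq_bigr => k _; rewrite mulrCA mulr_powdd; ring.
by apply: cvg_lim => //; apply: cvgMr_tmp; apply: cvgB; exact: freq_psum_cvg.
Qed.

Lemma freq_dd_lipschitz a t c T : `|a| + `|t| <= c -> 1 <= c ->
  (forall n, \sum_(k < n) `|h k| * (k%:R ^+ 2 * c ^+ k) <= T) ->
  `|freq_dd (a + t) a - freq_dd a a| <= T * `|t|.
Proof.
move=> atc c1 hT; apply: ler_limn_dist; try exact: freq_dd_psum_cvg.
move=> n; rewrite -sumrB; apply: le_trans (ler_norm_sum _ _ _) _.
apply: le_trans (ler_wpM2r (normr_ge0 t) (hT n)); rewrite mulr_suml.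
apply: ler_sum => k _; rewrite -mulrBr normrM -mulrA; apply: ler_wpM2l => //.
exact: ler_powddD_sub.
Qed.

Section IntegralLipschitz.
Variable C : R.
Hypothesis hC : integral_lipschitz h C.

Lemma freq_dd_bound_neq a b : a != b -> `|freq_dd a b| * `|a + b| <= 2 * C.
Proof.
move=> ab; rewrite freq_ddE // normrM normfV.
have abp : 0 < `|a - b| by rewrite normr_gt0 subr_eq0.
have := hC b a; rewrite [b + a]addrC mulrAC ler_pdivrMr //.
set X := `|_ - _|; set s := `|a + b|; set d := `|a - b|; lra.
Qed.

(* At a diagonal point [(b, b)], approach by [(b + t, b)] and use the Lipschitz bound in [t]. *)
Lemma freq_dd_bound a b : `|freq_dd a b| * `|a + b| <= 2 * C.
Proof.
have [->|ab] := eqVneq a b; last exact: freq_dd_bound_neq.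
pose c := `|b| + 1; have c1 : 1 <= c by rewrite /c lerDr.
have [T hT] := abs_series_sqr_bounded an (le_trans ler01 c1).
have T0 : 0 <= T by have := hT 0%N; rewrite big_ord0.
set g := freq_dd b b.
apply: (@le_of_forall_le_addmul _ _ _ (`|g| + T + T * `|b + b|)) => [|t t0 t1].
  by rewrite !addr_ge0 ?mulr_ge0.
set q := freq_dd (b + t) b.
have hq : `|q| * `|b + b + t| <= 2 * C.
  rewrite addrAC; apply: freq_dd_bound_neq.
  by rewrite -subr_eq0 addrAC subrr add0r gt_eqF.
have hqg : `|q - g| <= T * t.
  have := freq_dd_lipschitz (a := b) (t := t) _ c1 hT.
  by rewrite (gtr0_norm t0) /c lerD2l; apply.
have na := normr_ge0 (b + b); have ng := normr_ge0 g; have nq := normr_ge0 q.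
have Hg : `|g| <= `|q| + T * t.
  by have := ler_normD q (g - q); rewrite addrC subrK distrC; lra.
have Hq : `|q| <= `|g| + T.
  have := ler_normD g (q - g); rewrite addrC subrK.
  have : T * t <= T by rewrite -[X in _ <= X]mulr1 ler_wpM2l.
  lra.
have Hb : `|b + b| <= `|b + b + t| + t.
  by have := ler_normD (b + b + t) (- t); rewrite addrK normrN (gtr0_norm t0).
have S1 : `|g| * `|b + b| <= (`|q| + T * t) * `|b + b| by apply: ler_wpM2r.
have S2 : `|q| * `|b + b| <= `|q| * (`|b + b + t| + t) by apply: ler_wpM2l.
have S3 : `|q| * t <= (`|g| + T) * t by apply: ler_wpM2r => //; exact: ltW.
nra.
Qed.

End IntegralLipschitz.
End FreqDividedDifference.

Lemma cvg_sum_seq (R : realType) (J : Type) (r : seq J) (P : pred J)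
    (f : J -> nat -> R) (l : J -> R) :
  (forall j, P j -> f j @ \oo --> l j) ->
  (fun k => \sum_(j <- r | P j) f j k) @ \oo --> \sum_(j <- r | P j) l j.
Proof. by move=> fl; apply: cvg_big => //; exact: add_continuous. Qed.

Section MatrixLimits.
Variables (R : realType) (n : nat).
Implicit Types (M : nat -> 'M[R]_n) (L P : 'M[R]_n).

Definition mxcvg M L := forall i j, (fun k => M k i j) @ \oo --> L i j.

Lemma mxcvgD M1 M2 L1 L2 : mxcvg M1 L1 -> mxcvg M2 L2 ->
  mxcvg (fun k => M1 k + M2 k) (L1 + L2).
Proof.
move=> c1 c2 i j; rewrite mxE; under eq_fun do rewrite mxE.
exact: cvgD (c1 i j) (c2 i j).
Qed.

Lemma mxcvgN M L : mxcvg M L -> mxcvg (fun k => - M k) (- L).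
Proof. by move=> c i j; rewrite mxE; under eq_fun do rewrite mxE; exact: cvgN. Qed.

Lemma mxcvg_mull P M L : mxcvg M L -> mxcvg (fun k => P *m M k) (P *m L).
Proof.
move=> c i j; rewrite mxE; under eq_fun do rewrite mxE.
by apply: cvg_sum_seq => l _; apply: cvgMl_tmp.
Qed.

Lemma mxcvg_mulr P M L : mxcvg M L -> mxcvg (fun k => M k *m P) (L *m P).
Proof.
move=> c i j; rewrite mxE; under eq_fun do rewrite mxE.
by apply: cvg_sum_seq => l _; apply: cvgMr_tmp.
Qed.

Lemma mxcvg_unique M L1 L2 : mxcvg M L1 -> mxcvg M L2 -> L1 = L2.
Proof. by move=> c1 c2; apply/matrixP => i j; exact: cvg_unique (c1 i j) (c2 i j). Qed.

Lemma sqnorm_mulmx_cvg M L (x : 'cV[R]_n) : mxcvg M L ->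
  (fun k => sqnorm (M k *m x)) @ \oo --> sqnorm (L *m x).
Proof.
move=> c; rewrite /sqnorm; apply: cvg_sum_seq => i _.
have cx : (fun k => (M k *m x) i 0) @ \oo --> (L *m x) i 0.
  rewrite mxE; under eq_fun do rewrite mxE.
  by apply: cvg_sum_seq => j _; apply: cvgMr_tmp.
by rewrite expr2; under eq_fun do rewrite expr2; apply: cvgM.
Qed.

Lemma mxcvg_opnorm_le M L e : mxcvg M L -> (forall k, opnorm (M k) <= e) -> opnorm L <= e.
Proof.
move=> c Me; have e0 : 0 <= e by apply: le_trans (Me 0%N); apply: opnorm_ge0.
apply: opnorm_le_sqnorm => // x.
have cx := sqnorm_mulmx_cvg (x := x) c.
rewrite -(cvg_lim _ cx) //; apply: limr_le; first by apply/cvg_ex; eexists; exact: cx.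
apply: nearW => k; apply: le_trans (sqnorm_mulmx_le _ _) _.
by rewrite ler_wpM2r ?sqnorm_ge0 // ler_sqr ?nnegrE ?opnorm_ge0.
Qed.

End MatrixLimits.

Section GraphFilter.
Variables (R : realType) (n : nat) (h : nat -> R).
Implicit Types (A B P Q : 'M[R]_n).

Definition filter_psum k B : 'M[R]_n := \sum_(m < k) h m *: B ^+ m.

Lemma graph_filter_eq B L : mxcvg (fun k => filter_psum k B) L -> graph_filter h B = L.
Proof. by move=> c; apply/matrixP => i j; rewrite mxE /seqlim; exact: cvg_lim (c i j). Qed.

Lemma filter_psum_cvg B : analytic_filter h -> mxcvg (fun k => filter_psum k B) (graph_filter h B).
Proof.
move=> an i j; have [T hT] := abs_series_bounded an (opnorm_ge0 B).
have psumE : (fun k => filter_psum k B i j) = (fun k => \sum_(m < k) h m * (B ^+ m) i j).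
  by apply: funext => k; rewrite summxE; apply: eq_bigr => m _; rewrite mxE.
rewrite mxE /seqlim -/(filter_psum _ B) psumE.
apply: (@cvg_abs_bounded_series _ (fun m => h m * (B ^+ m) i j) T) => k.
apply: le_trans (hT k).
apply: ler_sum => m _; rewrite normrM ler_wpM2l //.
exact: le_trans (ler_entry_opnorm _ i j) (ler_opnormX _ _).
Qed.

Lemma filter_psum_conj k Q A : Q^T *m Q = 1%:M ->
  filter_psum k (Q *m A *m Q^T) = Q *m filter_psum k A *m Q^T.
Proof.
move=> QQ; have QQ' : Q *m Q^T = 1%:M by rewrite mulmx1C.
have conjX m : (Q *m A *m Q^T) ^+ m = Q *m A ^+ m *m Q^T.
  elim: m => [|m IH]; first by rewrite !expr0 mulmx1 QQ'.
  rewrite exprS -mulmxE IH !mulmxA -(mulmxA _ Q^T Q) QQ mulmx1.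
  by rewrite -!mulmxA [A *m (A ^+ m *m Q^T)]mulmxA mulmxE -exprS.
rewrite /filter_psum mulmx_sumr mulmx_suml; apply: eq_bigr => m _.
by rewrite conjX -scalemxAr -scalemxAl.
Qed.

Lemma filter_psum_mulmx_comm k P A B : A *m P = P *m B ->
  filter_psum k A *m P = P *m filter_psum k B.
Proof.
move=> AP.
have APX m : A ^+ m *m P = P *m B ^+ m.
  elim: m => [|m IH]; first by rewrite !expr0 mul1mx mulmx1.
  by rewrite exprS -mulmxE -mulmxA IH mulmxA AP -mulmxA mulmxE -exprS.
rewrite /filter_psum mulmx_suml mulmx_sumr; apply: eq_bigr => m _.
by rewrite -scalemxAl -scalemxAr APX.
Qed.

Hypothesis an : analytic_filter h.

Lemma graph_filter_conj Q A : Q^T *m Q = 1%:M ->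
  graph_filter h (Q *m A *m Q^T) = Q *m graph_filter h A *m Q^T.
Proof.
move=> QQ; apply: graph_filter_eq => i j; under eq_fun do rewrite filter_psum_conj //.
have c := mxcvg_mulr (P := Q^T) (mxcvg_mull (P := Q) (filter_psum_cvg (B := A) an)).
exact: c i j.
Qed.

Lemma graph_filter_mulmx_comm P A B : A *m P = P *m B ->
  graph_filter h A *m P = P *m graph_filter h B.
Proof.
move=> AP; apply: (@mxcvg_unique _ _ (fun k => filter_psum k A *m P)).
  exact: mxcvg_mulr (filter_psum_cvg an).
have c := mxcvg_mull (P := P) (filter_psum_cvg (B := B) an).
by move=> i j; under eq_fun do rewrite (filter_psum_mulmx_comm _ AP); exact: c i j.
Qed.

End GraphFilter.

Section SymmetricFilterNorm.
Variables (R : realType) (n : nat) (h : nat -> R).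
Implicit Types (B M : 'M[R]_n).

Lemma lincomb_exchange (X : nat -> 'M[R]_n) (f : 'I_n -> nat -> R) (a : 'I_n -> 'M[R]_n)
    (c : nat -> R) k :
  (forall m, X m = \sum_l f l m *: a l) ->
  \sum_(m < k) c m *: X m = \sum_l (\sum_(m < k) c m * f l m) *: a l.
Proof.
move=> XE; under eq_bigr do rewrite XE scaler_sumr.
rewrite exchange_big /=; apply: eq_bigr => l _.
by rewrite scaler_suml; apply: eq_bigr => m _; rewrite scalerA.
Qed.

Lemma trmx_sym_exp B k : B^T = B -> (B ^+ k)^T = B ^+ k.
Proof.
move=> Bs; elim: k => [|k IH]; first by rewrite expr0 trmx1.
by rewrite [in LHS]exprS -mulmxE trmx_mul IH Bs mulmxE -exprSr.
Qed.

Lemma trmx_filter_psum k B : B^T = B -> (filter_psum h k B)^T = filter_psum h k B.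
Proof.
move=> Bs; rewrite /filter_psum linear_sum; apply: eq_bigr => m _.
by rewrite linearZ /= trmx_sym_exp.
Qed.

Section EigenExpansion.
Variables (B : 'M[R]_n) (d : 'I_n -> R) (a : 'I_n -> 'M[R]_n).
Hypothesis BX : forall k, B ^+ k = \sum_l d l ^+ k *: a l.

Lemma filter_psum_sqr_spectral k :
  filter_psum h k B *m filter_psum h k B = \sum_l freq_psum h k (d l) ^+ 2 *: a l.
Proof.
have BH m : B ^+ m *m filter_psum h k B = \sum_l (d l ^+ m * freq_psum h k (d l)) *: a l.
  rewrite /filter_psum mulmx_sumr.
  under eq_bigr do rewrite -scalemxAr mulmxE -exprD.
  rewrite (lincomb_exchange _ _ (fun m' => BX (m + m')%N)); apply: eq_bigr => l _.
  by rewrite mulr_sumr; congr (_ *: _); apply: eq_bigr => m' _; rewrite exprD; ring.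
rewrite {1}/filter_psum mulmx_suml; under eq_bigr do rewrite -scalemxAl.
rewrite (lincomb_exchange _ _ BH); apply: eq_bigr => l _.
by rewrite expr2 /freq_psum mulr_suml; congr (_ *: _); apply: eq_bigr => m _; ring.
Qed.

Lemma sqnorm_sym_mulmx M (c : 'I_n -> R) (x : 'cV[R]_n) :
  M^T = M -> M *m M = \sum_l c l *: a l ->
  sqnorm (M *m x) = \sum_l c l * (x^T *m a l *m x) 0 0.
Proof.
move=> Ms MM; rewrite sqnormE trmx_mul Ms mulmxA -(mulmxA x^T M M) MM.
rewrite mulmx_sumr mulmx_suml summxE; apply: eq_bigr => l _.
by rewrite -scalemxAr -scalemxAl mxE.
Qed.

End EigenExpansion.

(* In an eigenbasis of [B], the filter acts as [h] on each eigenvalue. *)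
Lemma opnorm_graph_filter_sym_le1 B : B^T = B -> analytic_filter h ->
  (forall l : R, `|freq_resp h l| <= 1) -> opnorm (graph_filter h B) <= 1.
Proof.
move=> Bs an h1; have [d [a [BX a_psd]]] := real_sym_spectral Bs.
apply: opnorm_le_sqnorm => // x; rewrite expr1n mul1r.
pose w l : R := (x^T *m a l *m x) 0 0.
have sqx : sqnorm x = \sum_l w l.
  have one_sym : (1%:M : 'M[R]_n)^T = 1%:M by rewrite trmx1.
  have one_sqr : (1%:M : 'M[R]_n) *m 1%:M = \sum_l 1 *: a l.
    rewrite mul1mx; transitivity (B ^+ 0); first by rewrite expr0.
    by rewrite BX; under eq_bigr do rewrite expr0.
  rewrite -[x]mul1mx (sqnorm_sym_mulmx _ one_sym one_sqr).
  by under eq_bigr do rewrite mul1r.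
have cvg_sq := sqnorm_mulmx_cvg (x := x) (filter_psum_cvg (B := B) an).
have cvg_sq' : (fun k => sqnorm (filter_psum h k B *m x)) @ \oo -->
    \sum_l freq_resp h (d l) ^+ 2 * w l.
  under eq_fun do
    rewrite (sqnorm_sym_mulmx _ (trmx_filter_psum _ Bs) (filter_psum_sqr_spectral BX _)).
  apply: cvg_sum_seq => l _; apply: cvgMr_tmp.
  by rewrite expr2; under eq_fun do rewrite expr2; apply: cvgM; exact: freq_psum_cvg.
rewrite (cvg_unique _ cvg_sq cvg_sq') // sqx; apply: ler_sum => l _.
rewrite -[X in _ <= X]mul1r; apply: ler_wpM2r; first exact: a_psd.
by rewrite -real_normK ?num_real // expr_le1.
Qed.

End SymmetricFilterNorm.

Section PowerExpansion.
Variables (R : realType) (n : nat).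
Implicit Types (A Z : 'M[R]_n).

(* The parts of [(A + Z)^k] of degree one and of degree at least two in [Z]. *)
Fixpoint pow_lin A Z k : 'M[R]_n :=
  if k is k'.+1 then pow_lin A Z k' *m A + A ^+ k' *m Z else 0.

Fixpoint pow_rem A Z k : 'M[R]_n :=
  if k is k'.+1 then pow_rem A Z k' *m (A + Z) + pow_lin A Z k' *m Z else 0.

Lemma exprD_expand A Z k : (A + Z) ^+ k = A ^+ k + pow_lin A Z k + pow_rem A Z k.
Proof.
elim: k => [|k IH] /=; first by rewrite !expr0 !addr0.
rewrite exprSr -mulmxE IH !mulmxDl !mulmxDr exprSr -mulmxE.
rewrite -!addrA; congr (_ + _); rewrite addrCA; do 2 congr (_ + _).
by rewrite addrC -addrA.
Qed.

Lemma opnorm_pow_lin_le A Z k c z : opnorm A <= c -> opnorm Z <= z -> 1 <= c ->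
  opnorm (pow_lin A Z k) <= k%:R * c ^+ k * z.
Proof.
move=> Ac Zz c1; have c0 : 0 <= c by apply: le_trans c1.
have z0 : 0 <= z by apply: le_trans Zz; apply: opnorm_ge0.
elim: k => [|k IH] /=; first by rewrite !mul0r opnorm0.
apply: le_trans (ler_opnormD _ _) _.
have e1 : opnorm (pow_lin A Z k *m A) <= k%:R * c ^+ k * z * c.
  by apply: le_trans (ler_opnormM _ _) _; apply: ler_pM; rewrite ?opnorm_ge0.
have e2 : opnorm (A ^+ k *m Z) <= c ^+ k * z.
  apply: le_trans (ler_opnormM _ _) _; apply: ler_pM; rewrite ?opnorm_ge0 //.
  by apply: le_trans (ler_opnormX _ _) _; rewrite lerXn2r ?nnegrE ?opnorm_ge0.
have e3 : c ^+ k * z <= c * c ^+ k * z by rewrite ler_wpM2r // ler_peMl ?exprn_ge0.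
have ck : 0 <= c ^+ k by apply: exprn_ge0.
have kk : 0 <= (k%:R : R) * (c * c ^+ k) * z by rewrite !mulr_ge0 ?ler0n.
rewrite -natr1 exprS; nra.
Qed.

Lemma opnorm_pow_rem_le A Z k c z : opnorm A + z <= c -> opnorm Z <= z -> 1 <= c ->
  opnorm (pow_rem A Z k) <= k%:R ^+ 2 * c ^+ k * z ^+ 2.
Proof.
move=> Azc Zz c1; have c0 : 0 <= c by apply: le_trans c1.
have z0 : 0 <= z by apply: le_trans Zz; apply: opnorm_ge0.
have Ac : opnorm A <= c by apply: le_trans Azc; rewrite lerDl.
have AZc : opnorm (A + Z) <= c.
  by apply: le_trans (ler_opnormD _ _) _; apply: le_trans Azc; rewrite lerD2l.
elim: k => [|k IH] /=; first by rewrite expr0n !mul0r opnorm0.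
apply: le_trans (ler_opnormD _ _) _.
have e1 : opnorm (pow_rem A Z k *m (A + Z)) <= k%:R ^+ 2 * c ^+ k * z ^+ 2 * c.
  by apply: le_trans (ler_opnormM _ _) _; apply: ler_pM; rewrite ?opnorm_ge0.
have e2 : opnorm (pow_lin A Z k *m Z) <= k%:R * c ^+ k * z * z.
  apply: le_trans (ler_opnormM _ _) _; apply: ler_pM; rewrite ?opnorm_ge0 //.
  exact: opnorm_pow_lin_le.
have e3 : (k%:R : R) * c ^+ k * z * z <= k%:R * (c * c ^+ k) * z * z.
  by rewrite !ler_wpM2r // ler_wpM2l ?ler0n // ler_peMl ?exprn_ge0.
have ck : 0 <= c ^+ k by apply: exprn_ge0.
have kk : 0 <= (k%:R : R) * (c * c ^+ k) * z * z by rewrite !mulr_ge0 ?ler0n.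
have zz : 0 <= (c * c ^+ k) * z * z by rewrite !mulr_ge0.
rewrite -natr1 [c ^+ k.+1]exprS; nra.
Qed.

Lemma diag_mx_exp (v : 'rV[R]_n) k : diag_mx v ^+ k = diag_mx (\row_j v 0 j ^+ k).
Proof.
elim: k => [|k IH]; first by rewrite expr0; apply/matrixP => i j; rewrite !mxE expr0.
rewrite exprSr -mulmxE IH mulmx_diag; congr diag_mx.
by apply/rowP => j; rewrite !mxE exprSr.
Qed.

Lemma pow_lin_diag (v : 'rV[R]_n) Z k i j :
  pow_lin (diag_mx v) Z k i j = powdd k (v 0 i) (v 0 j) * Z i j.
Proof.
elim: k => [|k IH] /=; first by rewrite mxE mul0r.
by rewrite mxE mul_mx_diag mxE IH diag_mx_exp mul_diag_mx !mxE; ring.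
Qed.

End PowerExpansion.

Definition freq_dd_mx (R : realType) (n : nat) (h : nat -> R) (lam : 'rV[R]_n) : 'M[R]_n :=
  \matrix_(i, j) freq_dd h (lam 0 i) (lam 0 j).

(* Daleckii-Krein: the derivative of [A |-> H(A)] at a diagonal matrix is the
   Hadamard product with the divided differences of [h] at its eigenvalues. *)
Lemma graph_filter_diag_expand (R : realType) (n : nat) (h : nat -> R) (lam : 'rV[R]_n)
    (X : 'M[R]_n) (c z T : R) :
  analytic_filter h -> opnorm (diag_mx lam) + z <= c -> opnorm X <= z -> 1 <= c ->
  (forall k, \sum_(m < k) `|h m| * (m%:R ^+ 2 * c ^+ m) <= T) ->
  opnorm (graph_filter h (diag_mx lam + X) - graph_filter h (diag_mx lam)
          - schur (freq_dd_mx h lam) X) <= T * z ^+ 2.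
Proof.
move=> an Lzc Xz c1 hT; set L := diag_mx lam.
pose F k := \sum_(m < k) h m *: pow_lin L X m.
pose G k := \sum_(m < k) h m *: pow_rem L X m.
have psumE k : filter_psum h k (L + X) - filter_psum h k L - F k = G k.
  rewrite /filter_psum /F /G -!sumrB; apply: eq_bigr => m _.
  rewrite exprD_expand !scalerDr.
  move: (h m *: L ^+ m) (h m *: pow_lin L X m) (h m *: pow_rem L X m) => a b r.
  by rewrite -addrA -opprD [_ + r]addrC addrK.
have cF : mxcvg F (schur (freq_dd_mx h lam) X).
  move=> i j; rewrite !mxE.
  have -> : (fun k => F k i j) = (fun k => freq_dd_psum h k (lam 0 i) (lam 0 j) * X i j).
    apply: funext => k; rewrite /F summxE /freq_dd_psum mulr_suml.
    by apply: eq_bigr => m _; rewrite mxE pow_lin_diag mulrA.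
  by apply: cvgMr_tmp; exact: freq_dd_psum_cvg.
have cG := mxcvgD (mxcvgD (filter_psum_cvg (B := L + X) an) (mxcvgN (filter_psum_cvg (B := L) an)))
  (mxcvgN cF).
apply: (mxcvg_opnorm_le (M := G)).
  by move=> i j; under eq_fun do rewrite -psumE; exact: cG i j.
move=> k; apply: le_trans (ler_opnorm_sum _ _ _) _.
apply: le_trans (_ : \sum_(m < k) `|h m| * (m%:R ^+ 2 * c ^+ m) * z ^+ 2 <= _); last first.
  by rewrite -mulr_suml ler_wpM2r ?sqr_ge0.
apply: ler_sum => m _; apply: le_trans (ler_opnormZ _ _) _.
by rewrite -mulrA ler_wpM2l // opnorm_pow_rem_le.
Qed.

Section FirstOrderTerm.
Variables (R : realType) (n : nat).
Implicit Types (A M U V : 'M[R]_n).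

(* [V^T (U M U^T) V - M = (V^T U) M U^T (V - U) + V^T (U - V) M]. *)
Lemma opnorm_conj_sub_le U V M : U^T *m U = 1%:M -> V^T *m V = 1%:M ->
  opnorm (V^T *m (U *m M *m U^T) *m V - M) <= 2 * opnorm (U - V) * opnorm M.
Proof.
move=> UU VV; set s := opnorm (U - V).
have nVTU : opnorm (V^T *m U) <= 1.
  by rewrite -[X in _ <= X]mulr1; apply: le_trans (ler_opnormM _ _) _;
     apply: ler_pM; rewrite ?opnorm_ge0 ?opnorm_trmx_orth_le1 ?opnorm_orth_le1.
have nUVU : opnorm (U^T *m (V - U)) <= s.
  apply: le_trans (ler_opnormM _ _) _; rewrite -[s]mul1r.
  by apply: ler_pM; rewrite ?opnorm_ge0 ?opnorm_trmx_orth_le1 // -opprB ler_opnormN.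
have nVUV : opnorm (V^T *m (U - V)) <= s.
  apply: le_trans (ler_opnormM _ _) _; rewrite -[s]mul1r.
  by apply: ler_pM; rewrite ?opnorm_ge0 ?opnorm_trmx_orth_le1.
have -> : V^T *m (U *m M *m U^T) *m V - M
    = V^T *m U *m M *m (U^T *m (V - U)) + V^T *m (U - V) *m M.
  rewrite !mulmxBr !mulmxBl UU VV mul1mx !mulmx1 !mulmxA.
  by rewrite addrA subrK.
apply: le_trans (ler_opnormD _ _) _; rewrite mulr2n mulrDl mul1r mulrDl.
apply: lerD.
  apply: le_trans (ler_opnormM _ _) _; rewrite [s * _]mulrC.
  apply: ler_pM; rewrite ?opnorm_ge0 //; apply: le_trans (ler_opnormM _ _) _.
  by rewrite -[X in _ <= X]mul1r; apply: ler_pM; rewrite ?opnorm_ge0.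
apply: le_trans (ler_opnormM _ _) _.
by apply: ler_pM; rewrite ?opnorm_ge0.
Qed.

(* Split [V^T E V] into the diagonal matrix [M = U^T E U] and the misalignment error. *)
Lemma opnorm_schur_first_order_le (G : 'M[R]_n) (g : R) U V (mu : 'rV[R]_n) E :
  0 <= g -> (forall i j, `|G i j| <= g) ->
  U^T *m U = 1%:M -> V^T *m V = 1%:M -> E = U *m diag_mx mu *m U^T ->
  opnorm (schur G (V^T *m E *m V)) <= g * (1 + misalign U V * Num.sqrt n%:R) * opnorm E.
Proof.
move=> g0 Gg UU VV EE; set M := diag_mx mu; set s := opnorm (U - V).
have nE := opnorm_ge0 E; have s0 : 0 <= s by apply: opnorm_ge0.
have nM : opnorm M <= opnorm E.
  have -> : M = U^T *m E *m U by rewrite EE !mulmxA UU mul1mx -(mulmxA M) UU mulmx1.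
  by apply: ler_opnorm_orthM; rewrite ?trmxK mulmx1C.
have -> : schur G (V^T *m E *m V)
    = diag_mx (\row_i (G i i * mu 0 i)) + schur G (V^T *m E *m V - M).
  apply/matrixP => i j; rewrite !mxE.
  by have [<-|ij] := eqVneq i j; rewrite ?mulr1n ?mulr0n; ring.
apply: le_trans (ler_opnormD _ _) _.
have diag_le : opnorm (diag_mx (\row_i (G i i * mu 0 i))) <= g * opnorm E.
  apply: opnorm_diag_le; first by rewrite mulr_ge0.
  move=> i; rewrite mxE normrM; apply: ler_pM; rewrite ?normr_ge0 //.
  by apply: le_trans nM; have := ler_entry_opnorm M i i; rewrite /M mxE eqxx mulr1n.
have off_le : opnorm (schur G (V^T *m E *m V - M)) <= g * Num.sqrt n%:R * (2 * s * opnorm E).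
  apply: le_trans (opnorm_schur_le _ g0 Gg) _; rewrite ler_wpM2l ?mulr_ge0 ?sqrtr_ge0 //.
  apply: le_trans (_ : _ <= 2 * s * opnorm M) _; last by rewrite ler_wpM2l ?mulr_ge0.
  by rewrite EE; exact: opnorm_conj_sub_le.
apply: le_trans (lerD diag_le off_le) _.
rewrite /misalign -/s; have sqn : 0 <= Num.sqrt (n%:R : R) by apply: sqrtr_ge0.
have : 0 <= g * Num.sqrt n%:R * (s ^+ 2 * opnorm E) by rewrite !mulr_ge0 ?sqr_ge0.
nra.
Qed.

End FirstOrderTerm.

Lemma perm_mx_orth (R : realType) (N : nat) (s : 'S_N) :
  (perm_mx s : 'M[R]_N)^T *m perm_mx s = 1%:M.
Proof. by rewrite tr_perm_mx -perm_mxM mulVg perm_mx1. Qed.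

Lemma perm_dist_norm_le (R : realType) (N : nat) (A Ahat : 'M[R]_N) (s : 'S_N) :
  perm_dist_norm A Ahat <= opnorm (perm_mx s *m A - Ahat *m perm_mx s).
Proof.
apply: ge_inf; first by exists 0 => _ [Q _ <-]; apply: opnorm_ge0.
exists (perm_mx (s^-1)%g); first by exists (s^-1)%g.
by rewrite tr_perm_mx invgK.
Qed.

Definition freq_dd_weight (R : realType) (n : nat) (h : nat -> R) (lam : 'rV[R]_n) :=
  \matrix_(i, j) (freq_dd h (lam 0 i) (lam 0 j) * (lam 0 i + lam 0 j)) : 'M[R]_n.

Lemma schur_freq_dd_anticomm (R : realType) (n : nat) (h : nat -> R) (lam : 'rV[R]_n)
    (Y : 'M[R]_n) :
  schur (freq_dd_mx h lam) (Y *m diag_mx lam + diag_mx lam *m Y)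
    = schur (freq_dd_weight h lam) Y.
Proof. by apply/matrixP => i j; rewrite mul_mx_diag mul_diag_mx !mxE; ring. Qed.

Lemma freq_dd_weight_le (R : realType) (n : nat) (h : nat -> R) (C : R) (lam : 'rV[R]_n) :
  analytic_filter h -> integral_lipschitz h C ->
  forall i j, `|freq_dd_weight h lam i j| <= 2 * C.
Proof. by move=> an hC i j; rewrite mxE normrM; exact: freq_dd_bound. Qed.

Lemma misalign_ge0 (R : realType) (N : nat) (U V : 'M[R]_N) : 0 <= misalign U V.
Proof. by rewrite /misalign subr_ge0 expr_ge1 ?lerDr ?addr_ge0 ?opnorm_ge0. Qed.

Section FilterPerturbation.
Variables (R : realType) (N : nat) (h : nat -> R) (C T : R).
Variables (S V : 'M[R]_N) (lam : 'rV[R]_N).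
Hypotheses (an : analytic_filter h) (h1 : forall l : R, `|freq_resp h l| <= 1).
Hypotheses (hC : integral_lipschitz h C) (C0 : 0 <= C).
Hypotheses (Ssym : S^T = S) (VV : V^T *m V = 1%:M) (SE : S = V *m diag_mx lam *m V^T).
Hypothesis hT : forall k,
  \sum_(m < k) `|h m| * (m%:R ^+ 2 * (opnorm (diag_mx lam) + 1) ^+ m) <= T.
Local Notation L := (diag_mx lam).

Lemma relpert_conj (E : 'M[R]_N) :
  S + (E *m S + S *m E) = V *m (L + (V^T *m E *m V *m L + L *m (V^T *m E *m V))) *m V^T.
Proof.
have VV' : V *m V^T = 1%:M by rewrite mulmx1C.
rewrite !mulmxDr !mulmxDl -SE SE !mulmxA VV' mul1mx.
by rewrite -(mulmxA _ V V^T) VV' mulmx1.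
Qed.

Lemma graph_filter_relpert (P Shat E : 'M[R]_N) : P^T *m P = 1%:M ->
  P^T *m Shat *m P = S + (E *m S + S *m E) ->
  graph_filter h Shat *m P
    = P *m V *m graph_filter h (L + (V^T *m E *m V *m L + L *m (V^T *m E *m V))) *m V^T.
Proof.
move=> PP PE; have PP' : P *m P^T = 1%:M by rewrite mulmx1C.
have ShP : Shat *m P
    = P *m (V *m (L + (V^T *m E *m V *m L + L *m (V^T *m E *m V))) *m V^T).
  by rewrite -relpert_conj -PE !mulmxA PP' mul1mx.
by rewrite (graph_filter_mulmx_comm an ShP) graph_filter_conj // !mulmxA.
Qed.

Lemma opnorm_graph_filter_relpert_le (P Shat E U : 'M[R]_N) (mu : 'rV[R]_N) :
  P^T *m P = 1%:M -> Shat^T = Shat -> P^T *m Shat *m P = S + (E *m S + S *m E) ->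
  U^T *m U = 1%:M -> E = U *m diag_mx mu *m U^T ->
  opnorm (P *m graph_filter h S - graph_filter h Shat *m P)
    <= 2 * C * (1 + misalign U V * Num.sqrt N%:R) * opnorm E
       + (T + 2) * (2 * opnorm L * opnorm E) ^+ 2.
Proof.
move=> PP Shsym PE UU EE; set z := 2 * opnorm L * opnorm E.
have nE := opnorm_ge0 E; have nL := opnorm_ge0 L.
have T0 : 0 <= T by have := hT 0%N; rewrite big_ord0.
have first0 : 0 <= 2 * C * (1 + misalign U V * Num.sqrt N%:R) * opnorm E.
  by rewrite !mulr_ge0 // addr_ge0 // mulr_ge0 ?sqrtr_ge0 ?misalign_ge0.
have [z1|z1] := lerP z 1; last first.
  (* large perturbation: both filters have norm at most 1 *)
  apply: le_trans (_ : _ <= 2) _.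
    apply: le_trans (ler_opnormD _ _) _; rewrite -[2]/(1 + 1); apply: lerD.
      apply: le_trans (ler_opnormM _ _) _; rewrite -[1]mulr1.
      by apply: ler_pM; rewrite ?opnorm_ge0 ?opnorm_graph_filter_sym_le1 // opnorm_orth_le1.
    apply: le_trans (ler_opnormN _) _; apply: le_trans (ler_opnormM _ _) _; rewrite -[1]mulr1.
    by apply: ler_pM; rewrite ?opnorm_ge0 ?opnorm_graph_filter_sym_le1 // opnorm_orth_le1.
  have : 1 <= z ^+ 2 by rewrite expr2 -[1]mulr1; apply: ler_pM => //; exact: ltW.
  have : 0 <= T * z ^+ 2 by rewrite mulr_ge0 ?sqr_ge0.
  lra.
set Et := V^T *m E *m V; set X := Et *m L + L *m Et.
have nX : opnorm X <= z.
  have nEt : opnorm Et <= opnorm E by apply: ler_opnorm_orthM; rewrite ?trmxK mulmx1C.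
  have e1 : opnorm (Et *m L) <= opnorm E * opnorm L.
    by apply: le_trans (ler_opnormM _ _) _; apply: ler_wpM2r.
  have e2 : opnorm (L *m Et) <= opnorm L * opnorm E.
    by apply: le_trans (ler_opnormM _ _) _; apply: ler_wpM2l.
  by apply: le_trans (ler_opnormD _ _) _; rewrite /z; lra.
have -> : P *m graph_filter h S - graph_filter h Shat *m P
    = - (P *m V *m (graph_filter h (L + X) - graph_filter h L) *m V^T).
  rewrite (graph_filter_relpert PP PE) -/Et -/X {1}SE graph_filter_conj // !mulmxA.
  by rewrite mulmxBr mulmxBl opprB.
apply: le_trans (ler_opnormN _) _.
apply: le_trans (ler_opnorm_orthM _ _ _) _.
- by rewrite trmx_mul mulmxA -(mulmxA _ P^T) PP mulmx1.
- by rewrite trmxK.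
rewrite -(subrK (schur (freq_dd_mx h lam) X) (_ - _)) addrC.
apply: le_trans (ler_opnormD _ _) _; apply: lerD.
  rewrite schur_freq_dd_anticomm; apply: opnorm_schur_first_order_le UU VV EE.
    by rewrite mulr_ge0.
  exact: freq_dd_weight_le.
have Lz : opnorm L + z <= opnorm L + 1 by rewrite lerD2l.
apply: le_trans (graph_filter_diag_expand (lam := lam) an Lz nX _ hT) _; first by rewrite lerDr.
by rewrite ler_wpM2r ?sqr_ge0 // lerDl.
Qed.

End FilterPerturbation.

Theorem theorem2 (R : realType) (N : nat) (S V : 'M[R]_N) (lam : 'rV[R]_N)
    (h : nat -> R) (C : R) :
  S^T = S ->
  V^T *m V = 1%:M ->
  S = V *m diag_mx lam *m V^T ->
  0 < C ->
  analytic_filter h ->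
  (forall l : R, `|freq_resp h l| <= 1) ->
  integral_lipschitz h C ->
  exists K : R,
    forall (Shat E U : 'M[R]_N) (mu : 'rV[R]_N) (eps : R),
      Shat^T = Shat ->
      E^T = E ->
      U^T *m U = 1%:M ->
      E = U *m diag_mx mu *m U^T ->
      relpert S Shat E ->
      dist_rel S Shat <= opnorm E ->
      opnorm E <= eps ->
      perm_dist_norm (graph_filter h S) (graph_filter h Shat)
        <= 2 * C * (1 + misalign U V * Num.sqrt (N%:R)) * eps + K * eps ^+ 2.
Proof.
move=> Ssym VV SE C0 an h1 hC; set a := opnorm (diag_mx lam).
have [T hT] := abs_series_sqr_bounded an (addr_ge0 (opnorm_ge0 (diag_mx lam)) ler01).
have T0 : 0 <= T by have := hT 0%N; rewrite big_ord0.
exists ((T + 2) * (2 * a) ^+ 2).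
move=> Shat E U mu eps Shsym _ UU EE [P [s ->] PE] _ Eeps.
apply: le_trans (perm_dist_norm_le _ _ s) _.
apply: le_trans (opnorm_graph_filter_relpert_le an h1 hC (ltW C0) Ssym VV SE hT
  (perm_mx_orth _ s) Shsym PE UU EE) _.
have coef0 : 0 <= 2 * C * (1 + misalign U V * Num.sqrt N%:R).
  apply: mulr_ge0; first by apply: mulr_ge0 => //; exact: ltW.
  by apply: addr_ge0 => //; apply: mulr_ge0; [exact: misalign_ge0 | exact: sqrtr_ge0].
rewrite -/a exprMn mulrA; apply: lerD; first by apply: ler_wpM2l.
apply: ler_wpM2l; first by rewrite mulr_ge0 ?sqr_ge0 ?addr_ge0.
by rewrite ler_sqr ?nnegrE ?opnorm_ge0 // (le_trans (opnorm_ge0 E)).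
Qed.
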